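(* Let $\Lambda\subseteq\Sigma_A$ and $\Gamma\subseteq\Sigma_B$ be shift spaces. Take $d\in B$ and suppose $\Phi:\Lambda\to\Gamma$ is a map such that $\Phi(\mathcal O)=(ddd\dots)$ (the constant sequence with symbol $d$) and such that $C_\varepsilon:=\Phi^{-1}(\mathcal O)$ is finitely defined in $\Lambda$ in the case that $\mathcal O\in\Gamma$. Then $\Phi$ is continuous and commutes with the shift map if, and only if, $\Phi$ is a sliding block code given by $\bigl(\Phi(x)\bigr)_n=\sum_{a\in L_\Gamma\cup\{\varepsilon\}}a\mathbf{1}_{C_a}\circ\sigma^{n-1}(x)$ such that, for all $a\in L_\Gamma$, the set $C_a$ is a finite (possibly empty) union of generalized cylinders of $\Lambda$, with the following properties: (1) $C_a$ is empty for all but finitely many $a\in L_\Gamma$; and (2) for each $M\ge1$ there exists a finite set $F_M\subset L_\Lambda$ such that $\sigma^{n-1}\bigl(Z(\mathcal O,F_M)\cap\Lambda\bigr)\subseteq C_d$ for all $1\le n\le M$.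
   Context: Alphabets and sequences: $A$ (and similarly $B$) is a countable discrete alphabet, finite or infinite. Let $\varepsilon$ be a new symbol (the empty letter), $\tilde A=A\cup\{\varepsilon\}$. Put $\Sigma_A^{\mathrm{inf}}=A^{\mathbb N}$ and let $\Sigma_A^{\mathrm{fin}}$ be the set of sequences $(x_i)_{i\in\mathbb N}$ in $\tilde A$ containing at least one $\varepsilon$ such that $x_i=\varepsilon$ implies $x_{i+1}=\varepsilon$. The Ott–Tomforde–Willis full shift is $\Sigma_A=\Sigma_A^{\mathrm{inf}}$ if $A$ is finite and $\Sigma_A=\Sigma_A^{\mathrm{inf}}\cup\Sigma_A^{\mathrm{fin}}$ if $A$ is infinite. The length of $x$ is $l(x)=\min\{k-1: x_k=\varepsilon\}$ ($=\infty$ for $x\in A^{\mathbb N}$); a finite sequence of length $k$ is identified with the word $x_1\dots x_k$; the constant sequence $\mathcal O=(\varepsilon\varepsilon\varepsilon\dots)$ is the empty sequence. For $x\in\Sigma_A^{\mathrm{fin}}$ and finite $F\subset A$, the generalized cylinder is $Z(x,F)=\{y\in\Sigma_A: y_i=x_i \text{ for } 1\le i\le l(x),\ y_{l(x)+1}\notin F\}$ (so $Z(\mathcal O,F)=\{y: y_1\notin F\}$). $\Sigma_A$ carries the topology generated by the generalized cylinders. The shift map is $\sigma((x_i)_{i})=(x_{i+1})_i$ (so $\sigma(\mathcal O)=\mathcal O$). For $\Lambda\subseteq\Sigma_A$: $\Lambda^{\mathrm{fin}}=\Lambda\cap\Sigma_A^{\mathrm{fin}}$, $\Lambda^{\mathrm{inf}}=\Lambda\cap\Sigma_A^{\mathrm{inf}}$;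 $B_n(\Lambda)\subseteq\tilde A^n$ is the set of words of length $n$ occurring as consecutive subblocks of elements of $\Lambda$, $B(\Lambda)=\bigcup_{n}B_n(\Lambda)$, $L_\Lambda=B_1(\Lambda)\setminus\{\varepsilon\}$. Follower set: $\mathcal F(\Lambda,a)=\{b\in B_1(\Lambda): ab\in B_{n+1}(\Lambda)\}$ for $a\in B_n(\Lambda)$. A shift space is $\Lambda\subseteq\Sigma_A$ that is closed, satisfies $\sigma(\Lambda)\subseteq\Lambda$, and has the infinite extension property: $\mathcal O\in\Lambda$ iff $L_\Lambda$ is infinite, and a finite sequence $x\neq\mathcal O$ lies in $\Lambda$ iff $|\mathcal F(\Lambda,x)|=\infty$. Generalized cylinders of $\Lambda$ are the sets $Z(x,F)\cap\Lambda$. Finitely defined sets: $C\subseteq\Lambda$ is finitely defined in $\Lambda$ if there exist $I,J\subseteq\mathbb N$, integers $\ell_i,n_j\ge0$ and words $b_i,d_j\in B(\Sigma_A)$ with $C=\{x\in\Lambda: (x_1\dots x_{1+\ell_i})=b_i\text{ for some } i\in I\}$ and $\Lambda\setminus C=\{x\in\Lambda: (x_1\dots x_{1+n_j})=d_j \text{ for some } j\in J\}$. Sliding block codes: given a partition $\{C_a\}_{a\in B\cup\{\varepsilon\}}$ of a shift space $\Lambda$ such that each $C_a$ is finitely defined in $\Lambda$ and $\sigma(C_\varepsilon)\subseteq C_\varepsilon$, the map $\Phi:\Lambda\to\Sigma_B$ with $(\Phi(x))_n$ equal to the unique $a$ with $\sigma^{n-1}(x)\in C_a$ is a sliding block code.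 *)

From mathcomp Require Import all_boot all_order.
Set Implicit Arguments. Unset Strict Implicit. Unset Printing Implicit Defensive.

(* A sequence (x_i)_{i in N} over A~ = A ∪ {ε}: [None] is ε.
   Index convention: x_1 (paper) is [x 0] here. *)
Definition sq (A : Type) := nat -> option A.

Section OTW.
Variable A : countType.

Definition alph_finite : Prop := exists l : seq A, forall a, a \in l.

Definition inSigma (x : sq A) : Prop :=
  (forall i, x i = None -> x i.+1 = None) /\
  (alph_finite -> forall i, x i <> None).

Definition Oseq : sq A := fun _ => None.

Definition word_seq (w : seq A) : sq A :=
  fun i => if i < size w then nth None [seq Some a | a <- w] i
           else None.

Definition shift (x : sq A) : sq A := fun i => x i.+1.

Definition cyl (w : seq A) (F : seq A) (y : sq A) : Prop :=
  inSigma y /\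
  (forall i, i < size w -> y i = nth None [seq Some a | a <- w] i) /\
  (match y (size w) with Some a => a \notin F | None => True end).

Definition in_all_cyl (l : seq (seq A * seq A)) (y : sq A) : Prop :=
  inSigma y /\ forall p, p \in l -> cyl p.1 p.2 y.

(* U (read as the subset U ∩ Σ_A) is open in the topology on Σ_A
   generated by the generalized cylinders *)
Definition is_open (U : sq A -> Prop) : Prop :=
  forall x, inSigma x -> U x ->
    exists l, in_all_cyl l x /\ forall y, in_all_cyl l y -> U y.

Definition is_closed (L : sq A -> Prop) : Prop :=
  is_open (fun x => ~ L x).

Definition occurs (P : sq A -> Prop) (w : seq (option A)) : Prop :=
  exists x, P x /\ exists i, forall j, j < size w -> x (i + j) = nth None w j.

Definition Lset (L : sq A -> Prop) (a : A) : Prop := occurs L [:: Some a].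

Definition follower (L : sq A -> Prop) (w : seq (option A)) (b : option A) : Prop :=
  occurs L (rcons w b).

Definition infinite_set (T : eqType) (P : T -> Prop) : Prop :=
  ~ exists l : seq T, forall t, P t -> t \in l.

Definition shift_space (L : sq A -> Prop) : Prop :=
  (forall x, L x -> inSigma x) /\
  is_closed L /\
  (forall x, L x -> L (shift x)) /\
  (L Oseq <-> infinite_set (Lset L)) /\
  (forall w : seq A, w != [::] ->
     (L (word_seq w) <-> infinite_set (follower L [seq Some a | a <- w]))).

Definition prefix_is (x : sq A) (n : nat) (b : seq (option A)) : Prop :=
  size b = n.+1 /\ forall k, k <= n -> x k = nth None b k.

Definition finitely_defined (L C : sq A -> Prop) : Prop :=
  (forall x, C x -> L x) /\
  exists (I J : nat -> Prop) (ell n : nat -> nat) (b d : nat -> seq (option A)),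
    (forall i, I i -> occurs inSigma (b i)) /\
    (forall j, J j -> occurs inSigma (d j)) /\
    (forall x, C x <-> L x /\ exists i, I i /\ prefix_is x (ell i) (b i)) /\
    (forall x, (L x /\ ~ C x) <-> L x /\ exists j, J j /\ prefix_is x (n j) (d j)).

End OTW.

Definition continuous_on (A B : countType) (L : sq A -> Prop)
  (Phi : sq A -> sq B) : Prop :=
  forall V : sq B -> Prop, is_open V ->
    exists U : sq A -> Prop, is_open U /\ forall x, L x -> (V (Phi x) <-> U x).

From mathcomp Require Import all_boot all_order.
From Stdlib Require Import Classical ClassicalEpsilon FunctionalExtensionality.
Set Implicit Arguments. Unset Strict Implicit. Unset Printing Implicit Defensive.

(* A continuous shift-commuting [Phi] is determined by its first coordinate, so
   the [C_a] are the fibres of [x |-> Phi(x)_1]. That coordinate is locally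
   constant on [Λ]: where it is a symbol by continuity, on [C_ε] because [C_ε]
   is finitely defined. As [Λ] is compact, its fibres are finite unions of
   cylinders and it takes finitely many values; condition (2) is continuity at
   [O], whose image is [ddd...].
   Conversely, [Phi(y)_(i+1)] is read off [σ^i y]. If [x] has no [ε] among its
   first [i] entries, [σ^i] is continuous at [x], and since each [C_b] is a
   finite union of cylinders, hence open and closed in [Λ], near [x] that
   coordinate equals [Phi(x)_(i+1)] when this is a symbol and otherwise avoids
   any given finite set of symbols, which is continuity for the generalized
   cylinders of [Σ_B]. If [x] has its first [ε] at position [k <= i],
   condition (2) makes that coordinate [d] near [x]. *)

Lemma forall_lt_or_least_failure (P : nat -> Prop) N :
  (forall j, j < N -> P j) \/ exists k, k < N /\ ~ P k /\ forall j, j < k -> P j.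
Proof.
elim: N => [|N [IH|[k [ltkN [notPk Pj]]]]]; first by left.
- have [PN|notPN] := classic (P N); last by right; exists N.
  by left=> j; rewrite ltnS leq_eqVlt => /orP [/eqP -> //|/IH].
- by right; exists k; split; [exact: ltnW|].
Qed.

Lemma exists_filter (T : eqType) (s : seq T) (P : T -> Prop) :
  exists s' : seq T, forall a, a \in s' <-> a \in s /\ P a.
Proof.
elim: s => [|t s [s' s'P]]; first by exists [::] => a; split=> [|[]].
have [Pt|notPt] := classic (P t).
- exists (t :: s') => a; rewrite !in_cons; split.
    by case/orP=> [/eqP ->|/s'P [sa Pa]]; rewrite ?eqxx ?sa ?orbT.
  by case=> /orP [/eqP ->|sa Pa]; rewrite ?eqxx // (proj2 (s'P a)) ?orbT.
- exists s' => a; rewrite s'P in_cons; split=> [[-> //]|[/orP [/eqP -> //|-> //]]].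
  by rewrite orbT.
Qed.

Lemma finite_choice (T U : eqType) (P : T -> U -> Prop) (s : seq T) :
  (forall t, t \in s -> exists u, P t u) ->
  exists s' : seq U, forall t, t \in s -> exists2 u, u \in s' & P t u.
Proof.
elim: s => [|t s IH] sP; first by exists [::].
have [u Ptu] := sP t (mem_head _ _).
have [s' s'P] : exists s' : seq U, forall t', t' \in s -> exists2 u, u \in s' & P t' u.
  by apply: IH => t' st'; apply: sP; rewrite in_cons st' orbT.
exists (u :: s') => t'; rewrite in_cons => /orP [/eqP ->|/s'P [u' su' Pu']].
  by exists u; rewrite ?mem_head.
by exists u'; rewrite ?in_cons ?su' ?orbT.
Qed.

Section Sequences.
Variable A : countType.
Implicit Types (x y : sq A) (w F : seq A).

Lemma iter_shiftE n x i : iter n (@shift A) x i = x (n + i).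
Proof. by elim: n i => [|n IH] i //=; rewrite /shift IH addnS. Qed.

Lemma inSigma_None_tail x k j : inSigma x -> x k = None -> k <= j -> x j = None.
Proof.
move=> [tail _] xk; elim: j => [|j IH]; first by rewrite leqn0 => /eqP <-.
by rewrite leq_eqVlt => /orP [/eqP <- //|/IH /tail].
Qed.

Lemma inSigma_iter_shift n x : inSigma x -> inSigma (iter n (@shift A) x).
Proof.
by move=> [tail inf]; split=> [i|fin i]; rewrite !iter_shiftE ?addnS; [apply: tail|apply: inf].
Qed.

Lemma iter_shift_Oseq x k : inSigma x -> x k = None -> iter k (@shift A) x = Oseq A.
Proof.
move=> Sx xk; apply: functional_extensionality => j.
by rewrite iter_shiftE (inSigma_None_tail Sx xk (leq_addr _ _)).
Qed.

Lemma defined_or_first_None x i :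
  (forall j, j < i -> x j <> None) \/
  exists k, [/\ k < i, x k = None & forall j, j < k -> x j <> None].
Proof.
have [|[k [ltki [xk defx]]]] := forall_lt_or_least_failure (fun j => x j <> None) i.
  by left.
by right; exists k; split=> //; apply: NNPP.
Qed.

Definition starts_with w x :=
  forall i, i < size w -> x i = nth None [seq Some a | a <- w] i.

Lemma nth_map_Some w k :
  k < size w -> exists b, nth None [seq Some a | a <- w] k = Some b.
Proof. by elim: w k => [|a w IH] [|k] //= ltk; [exists a|exact: IH]. Qed.

Lemma starts_with_size w x k : starts_with w x -> x k = None -> size w <= k.
Proof.
move=> xw xk; rewrite leqNgt; apply/negP => ltk.
by have [b wk] := nth_map_Some ltk; move: (xw k ltk); rewrite xk wk.
Qed.

Lemma starts_with_rcons w a x :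
  starts_with w x -> x (size w) = Some a -> starts_with (rcons w a) x.
Proof.
move=> xw xa i; rewrite size_rcons ltnS map_rcons nth_rcons size_map.
by rewrite leq_eqVlt => /orP [/eqP ->|lti]; rewrite ?ltnn ?eqxx // lti xw.
Qed.

Definition prefix_word x N : seq A := pmap x (iota 0 N).

Lemma map_Some_prefix_word x N :
  (forall j, j < N -> x j <> None) ->
  [seq Some a | a <- prefix_word x N] = map x (iota 0 N).
Proof.
move=> defx; rewrite pmapS_filter; congr map; apply/all_filterP/allP => j.
by rewrite mem_iota => /andP [_ ltj]; case: (x j) (defx j ltj).
Qed.

Lemma size_prefix_word x N :
  (forall j, j < N -> x j <> None) -> size (prefix_word x N) = N.
Proof.
by move=> defx; rewrite -(size_map Some) map_Some_prefix_word // size_map size_iota.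
Qed.

Lemma nth_prefix_word x N i :
  (forall j, j < N -> x j <> None) -> i < N ->
  nth None [seq Some a | a <- prefix_word x N] i = x i.
Proof.
by move=> defx ltiN; rewrite map_Some_prefix_word // (nth_map 0) ?size_iota // nth_iota.
Qed.

Lemma cyl_agree w F x y :
  cyl w F x -> inSigma y -> (forall i, i <= size w -> y i = x i) -> cyl w F y.
Proof.
move=> [_ [xw xF]] Sy yx; split=> //; split; last by rewrite yx.
by move=> i ltiw; rewrite yx ?xw // ltnW.
Qed.

Lemma cyl_prefix_word x N F :
  inSigma x -> (forall j, j < N -> x j <> None) ->
  (if x N is Some a then is_true (a \notin F) else True) -> cyl (prefix_word x N) F x.
Proof.
move=> Sx defx xF; split=> //; rewrite size_prefix_word //.
by split=> // i ltiN; rewrite nth_prefix_word.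
Qed.

Lemma cyl_prefix_word_agree x y N F :
  (forall j, j < N -> x j <> None) -> cyl (prefix_word x N) F y ->
  forall i, i < N -> y i = x i.
Proof.
by move=> defx [_ [yw _]] i ltiN; rewrite yw ?size_prefix_word // nth_prefix_word.
Qed.

End Sequences.

Section CylinderNeighbourhoods.
Variable A : countType.
Implicit Types (x y : sq A) (w F : seq A) (P Q : sq A -> Prop).

Definition nbhd x P := exists l, in_all_cyl l x /\ forall y, in_all_cyl l y -> P y.

Lemma nbhd_self x P : nbhd x P -> P x.
Proof. by move=> [l [xl lP]]; apply: lP. Qed.

Lemma nbhd_sub x P Q : (forall y, P y -> Q y) -> nbhd x P -> nbhd x Q.
Proof. by move=> PQ [l [xl lP]]; exists l; split=> // y /lP /PQ. Qed.

Lemma nbhd_cyl w F x : cyl w F x -> nbhd x (cyl w F).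
Proof.
move=> xwF; exists [:: (w, F)]; split.
  by split=> [|p /[!inE] /eqP ->] //; case: xwF.
by move=> y [_ ywF]; apply: (ywF (w, F)); rewrite inE.
Qed.

Lemma cyl_open w F : is_open (cyl w F).
Proof. by move=> x _; apply: nbhd_cyl. Qed.

Lemma nbhdT x : inSigma x -> nbhd x (fun _ => True).
Proof. by move=> Sx; exists [::]. Qed.

Lemma in_all_cyl_cat l1 l2 y :
  in_all_cyl (l1 ++ l2) y <-> in_all_cyl l1 y /\ in_all_cyl l2 y.
Proof.
split=> [[Sy yl]|[[Sy yl1] [_ yl2]]].
  by split; split=> // p lp; apply: yl; rewrite mem_cat lp ?orbT.
by split=> // p; rewrite mem_cat => /orP [/yl1|/yl2].
Qed.

Lemma nbhd_and x P Q : nbhd x P -> nbhd x Q -> nbhd x (fun y => P y /\ Q y).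
Proof.
move=> [l1 [xl1 l1P]] [l2 [xl2 l2Q]]; exists (l1 ++ l2).
by split=> [|y /in_all_cyl_cat [/l1P ? /l2Q ?]] //; apply/in_all_cyl_cat.
Qed.

Lemma nbhd_all (T : eqType) (s : seq T) x (P : T -> sq A -> Prop) :
  inSigma x -> (forall t, t \in s -> nbhd x (P t)) ->
  nbhd x (fun y => forall t, t \in s -> P t y).
Proof.
move=> Sx; elim: s => [|t s IH] sP; first exact: nbhd_sub (nbhdT Sx).
have Ps : nbhd x (fun y => forall t, t \in s -> P t y).
  by apply: IH => t' st'; apply: sP; rewrite in_cons st' orbT.
apply: nbhd_sub (nbhd_and (sP t (mem_head _ _)) Ps) => y [Pty Psy] t'.
by rewrite in_cons => /orP [/eqP ->|/Psy].
Qed.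

(* Cut [x] after its first [ε], or after the longest word of [l]; in the first
   case all letters excluded by [l] must be excluded at once. *)
Lemma in_all_cyl_refine l x :
  in_all_cyl l x -> exists w F, cyl w F x /\ forall y, cyl w F y -> in_all_cyl l y.
Proof.
move=> [Sx xl]; set N := (\max_(q <- l) size q.1).+1.
have size_lt p : p \in l -> size p.1 < N.
  by move=> lp; rewrite ltnS; apply: leq_bigmax_seq lp _.
have [defx|[k [ltkN xk defx]]] := defined_or_first_None x N.
  exists (prefix_word x N), [::]; split; first by apply: cyl_prefix_word => //; case: (x N).
  move=> y ywF; have yx := cyl_prefix_word_agree defx ywF; split=> [|p lp]; first by case: ywF.
  apply: cyl_agree (xl p lp) _ _; first by case: ywF.
  by move=> i lei; apply: yx; apply: leq_ltn_trans lei (size_lt p lp).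
exists (prefix_word x k), (flatten [seq q.2 | q <- l]); split.
  by apply: cyl_prefix_word => //; rewrite xk.
move=> y ywF; have yx := cyl_prefix_word_agree defx ywF; have [Sy [_ yF]] := ywF.
split=> // p lp; have [_ [xp _]] := xl p lp.
move: (starts_with_size xp xk); rewrite leq_eqVlt => /orP [/eqP sizep|ltpk]; last first.
  by apply: cyl_agree (xl p lp) Sy _ => i lei; apply: yx; apply: leq_ltn_trans lei ltpk.
split=> //; split; first by move=> i; rewrite sizep => ltik; rewrite yx ?xp ?sizep.
move: yF; rewrite sizep size_prefix_word //.
case: (y k) => // a aF; apply: contra aF => ap.
by apply/flatten_mapP; exists p.
Qed.

Lemma nbhdP x P :
  nbhd x P <-> exists w F, cyl w F x /\ forall y, cyl w F y -> P y.
Proof.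
split=> [[l [xl lP]]|[w [F [xwF wFP]]]]; last exact: nbhd_sub (nbhd_cyl xwF).
by have [w [F [xwF wFl]]] := in_all_cyl_refine xl; exists w, F; split=> // y /wFl /lP.
Qed.

Lemma nbhd_Oseq P :
  nbhd (Oseq A) P -> exists F, forall y, cyl [::] F y -> P y.
Proof.
move=> /nbhdP [w [F [OwF wFP]]]; exists F => y [Sy [_ yF]]; apply: wFP.
have [_ [Ow _]] := OwF; have /eqP sizew : size w == 0 by rewrite -leqn0 (starts_with_size Ow).
by split=> //; split=> [i|]; rewrite sizew.
Qed.

Lemma nbhd_not_cyl w F x :
  inSigma x -> ~ cyl w F x -> nbhd x (fun y => ~ cyl w F y).
Proof.
move=> Sx not_xwF; apply/nbhdP.
have [xw|[k [ltkw [xk xw]]]] :=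
  forall_lt_or_least_failure (fun j => x j = nth None [seq Some a | a <- w] j) (size w).
- have defx j : j < size w -> x j <> None.
    by move=> ltjw; rewrite xw //; have [b ->] := nth_map_Some ltjw.
  case xa: (x (size w)) => [a|]; last by case: not_xwF; split=> //; rewrite xa.
  have aF : a \in F.
    by apply/negPn/negP => aF; apply: not_xwF; split=> //; rewrite xa.
  have defx' j : j < (size w).+1 -> x j <> None.
    by rewrite ltnS leq_eqVlt => /orP [/eqP ->|/defx //]; rewrite xa.
  exists (prefix_word x (size w).+1), [::]; split.
    by apply: cyl_prefix_word => //; case: (x _).
  by move=> y ywF [_ [_]]; rewrite (cyl_prefix_word_agree defx' ywF) // xa aF.
- have [b wb] := nth_map_Some ltkw.
  have defx j : j < k -> x j <> None.
    by move=> ltjk; rewrite xw //; have [b' ->] := nth_map_Some (ltn_trans ltjk ltkw).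
  exists (prefix_word x k), [:: b]; split.
    apply: cyl_prefix_word => //; case xk': (x k) => [a|] //; rewrite inE.
    by apply/eqP => ab; apply: xk; rewrite xk' wb ab.
  move=> y [_ [_]]; rewrite size_prefix_word // => yb [_ [yw _]].
  by move: yb; rewrite (yw k ltkw) wb inE eqxx.
Qed.

Lemma nbhd_iter_shift i x P :
  inSigma x -> (forall j, j < i -> x j <> None) ->
  nbhd (iter i (@shift A) x) P -> nbhd x (fun y => P (iter i (@shift A) y)).
Proof.
move=> Sx defx /nbhdP [w [F [[_ [xw xF]] wFP]]]; apply/nbhdP.
have sizex := size_prefix_word defx.
have nth_cat_prefix (j : nat) : i <= j ->
    nth None [seq Some a | a <- prefix_word x i ++ w] j =
    nth None [seq Some a | a <- w] (j - i).
  by move=> leij; rewrite map_cat nth_cat size_map sizex ltnNge leij.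
exists (prefix_word x i ++ w), F; split.
  split=> //; split; last by rewrite size_cat sizex -iter_shiftE.
  move=> j; rewrite size_cat sizex => ltj; case: (leqP i j) => [leij|ltji].
    by rewrite nth_cat_prefix // -xw ?ltn_subLR // iter_shiftE subnKC.
  by rewrite map_cat nth_cat size_map sizex ltji nth_prefix_word.
move=> y [Sy [yw yF]]; apply: wFP; split; first exact: inSigma_iter_shift.
split; last by rewrite iter_shiftE; move: yF; rewrite size_cat sizex.
move=> j ltjw; rewrite iter_shiftE yw ?size_cat ?sizex ?ltn_add2l //.
by rewrite nth_cat_prefix ?leq_addr // addKn.
Qed.

End CylinderNeighbourhoods.

Fixpoint iterate_rcons (T : Type) (f : seq T -> T) n : seq T :=
  if n is n'.+1 then rcons (iterate_rcons f n') (f (iterate_rcons f n')) else [::].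

Lemma size_iterate_rcons (T : Type) (f : seq T -> T) n : size (iterate_rcons f n) = n.
Proof. by elim: n => //= n IH; rewrite size_rcons IH. Qed.

Lemma nth_iterate_rcons (T : Type) (f : seq T -> T) t0 n i :
  i < n -> nth t0 (iterate_rcons f n) i = nth t0 (iterate_rcons f i.+1) i.
Proof.
elim: n => // n IH; rewrite ltnS leq_eqVlt => /orP [/eqP -> //|ltin] /=.
by rewrite nth_rcons size_iterate_rcons ltin IH.
Qed.

Section WordSequences.
Variable A : countType.
Implicit Types (x : sq A) (w F : seq A).

Lemma word_seq_lt w i : i < size w -> word_seq w i = nth None [seq Some a | a <- w] i.
Proof. by rewrite /word_seq => ->. Qed.

Lemma word_seq_ge w i : size w <= i -> word_seq w i = None.
Proof. by rewrite /word_seq ltnNge => ->. Qed.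

Lemma inSigma_word_seq w : ~ alph_finite A -> inSigma (word_seq w).
Proof.
move=> infA; split=> [i wi|//]; apply: word_seq_ge.
case: (ltnP i (size w)) => [ltiw|]; last exact: leqW.
by have [b wb] := nth_map_Some ltiw; move: wi; rewrite word_seq_lt // wb.
Qed.

(* The neighbourhoods of the finite sequence [w] are why a König argument
   still works over an infinite alphabet: [Z(w', F)] around [w] misses only
   the extensions of [w] by one of the finitely many letters of [F]. *)
Lemma cyl_word_seq w' F w x :
  cyl w' F (word_seq w) -> inSigma x -> starts_with w x ->
  cyl w' F x \/ exists2 a, a \in F & x (size w) = Some a.
Proof.
move=> ww' Sx xw; have [_ [w'w w'F]] := ww'.
move: (starts_with_size w'w (word_seq_ge (leqnn _))); rewrite leq_eqVlt.
case/orP=> [/eqP sizew'|ltw'w]; last first.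
  left; apply: cyl_agree ww' Sx _ => i lei.
  by rewrite xw ?word_seq_lt //; apply: leq_ltn_trans lei ltw'w.
have xw' : starts_with w' x.
  by move=> i ltiw'; rewrite -w'w // word_seq_lt -?sizew' // xw // -sizew'.
case xa: (x (size w)) => [a|]; last by left; do 2!split=> //; rewrite sizew' xa.
case aF: (a \in F); first by right; exists a.
by left; do 2!split=> //; rewrite sizew' xa aF.
Qed.

End WordSequences.

Section Compactness.
Variables (A : countType) (L : sq A -> Prop) (Good : seq A -> seq A -> Prop).
Hypotheses (L_inSigma : forall x, L x -> inSigma x) (L_closed : is_closed L).
Hypothesis Good_cover : forall x, L x -> exists w F, Good w F /\ cyl w F x.

Definition good_cover (l : seq (seq A * seq A)) (P : sq A -> Prop) :=
  (forall p, p \in l -> Good p.1 p.2) /\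
  forall x, L x -> P x -> exists2 p, p \in l & cyl p.1 p.2 x.

Definition finitely_covered w := exists l, good_cover l (starts_with w).

Lemma cyl_good_or_off x :
  inSigma x -> exists w F, cyl w F x /\ (Good w F \/ forall y, cyl w F y -> ~ L y).
Proof.
move=> Sx; have [Lx|notLx] := classic (L x).
  by have [w [F [good xwF]]] := Good_cover Lx; exists w, F; split=> //; left.
have /nbhdP [w [F [xwF notL]]] := L_closed Sx notLx.
by exists w, F; split=> //; right.
Qed.

Lemma good_cover_big (T : eqType) (s : seq T) (P : T -> sq A -> Prop) :
  (forall t, t \in s -> exists l, good_cover l (P t)) ->
  exists l, good_cover l (fun x => exists2 t, t \in s & P t x).
Proof.
elim: s => [|t s IH] sP; first by exists [::]; split=> // x _ [].
have [l1 [good1 cov1]] := sP t (mem_head _ _).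
have [l2 [good2 cov2]] : exists l, good_cover l (fun x => exists2 t, t \in s & P t x).
  by apply: IH => t' st'; apply: sP; rewrite in_cons st' orbT.
exists (l1 ++ l2); split=> [p|x Lx [t']]; first by rewrite mem_cat => /orP [/good1|/good2].
rewrite in_cons => /orP [/eqP -> /(cov1 x Lx) [p l1p xp]|st' Pt'x].
  by exists p; rewrite ?mem_cat ?l1p.
have [p l2p xp] := cov2 x Lx (ex_intro2 _ _ t' st' Pt'x).
by exists p; rewrite ?mem_cat ?l2p ?orbT.
Qed.

Lemma not_finitely_covered_rcons w :
  ~ finitely_covered w -> exists a, ~ finitely_covered (rcons w a).
Proof.
move=> not_covw; apply: NNPP => all_cov; apply: not_covw.
have cov_rcons (s : seq A) : exists l, good_cover l
    (fun x => exists2 a, a \in s & starts_with (rcons w a) x).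
  by apply: good_cover_big => a _; apply: NNPP => ?; apply: all_cov; exists a.
have [[s allA]|infA] := classic (alph_finite A).
  have [l [good cov]] := cov_rcons s; exists l; split=> // x Lx xw; apply: cov => //.
  have [_ /(_ (ex_intro _ s allA) (size w))] := L_inSigma Lx.
  by case xa: (x (size w)) => [a|] // _; exists a; [exact: allA|exact: starts_with_rcons].
have [w' [F [ww' w'F]]] := cyl_good_or_off (inSigma_word_seq w infA).
have [l [good cov]] := cov_rcons F.
have ext x : L x -> starts_with w x ->
    cyl w' F x \/ exists2 p, p \in l & cyl p.1 p.2 x.
  move=> Lx xw; case: (cyl_word_seq ww' (L_inSigma Lx) xw) => [|[a aF xa]]; first by left.
  by right; apply: cov => //; exists a => //; apply: starts_with_rcons.
case: w'F => [goodw'|notL].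
  exists ((w', F) :: l); split=> [p|x Lx /(ext x Lx) [xw'|[p lp xp]]].
  - by rewrite in_cons => /orP [/eqP -> //|/good].
  - by exists (w', F); rewrite ?mem_head.
  - by exists p; rewrite ?in_cons ?lp ?orbT.
exists l; split=> // x Lx /(ext x Lx) [xw'|//].
by case: (notL x xw').
Qed.

(* König's lemma: an uncovered word extends letter by letter to a point of
   [Σ_A]; a single cylinder around that point covers a long enough prefix. *)
Lemma cyl_cover_finite :
  exists l : seq (seq A * seq A), (forall p, p \in l -> Good p.1 p.2) /\
    forall x, L x -> exists2 p, p \in l & cyl p.1 p.2 x.
Proof.
apply: NNPP => not_cov.
have not_cov0 : ~ finitely_covered [::].
  by move=> [l [good cov]]; apply: not_cov; exists l; split=> // x Lx; apply: cov.
have [a0 _] := not_finitely_covered_rcons not_cov0.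
pose extends w a := ~ finitely_covered w -> ~ finitely_covered (rcons w a).
pose next w := epsilon (inhabits a0) (extends w).
have next_spec w : extends w (next w).
  apply: epsilon_spec; rewrite /extends.
  have [covw|/not_finitely_covered_rcons [a nca]] := classic (finitely_covered w).
    by exists a0.
  by exists a.
have not_cov_n n : ~ finitely_covered (iterate_rcons next n).
  by elim: n => //= n IH; apply: next_spec.
pose x : sq A := fun i => Some (nth a0 (iterate_rcons next i.+1) i).
have Sx : inSigma x by [].
have agree n y : starts_with (iterate_rcons next n) y -> forall i, i < n -> y i = x i.
  move=> yn i ltin; rewrite yn ?size_iterate_rcons //.
  by rewrite (nth_map a0) ?size_iterate_rcons // nth_iterate_rcons.
have [w [F [xwF good_or_notL]]] := cyl_good_or_off Sx.
apply: (not_cov_n (size w).+1).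
have wF_cover y : L y -> starts_with (iterate_rcons next (size w).+1) y -> cyl w F y.
  by move=> Ly yn; apply: cyl_agree xwF (L_inSigma Ly) _ => i lei; apply: agree yn _ _.
case: good_or_notL => [good|notL].
  exists [:: (w, F)]; split=> [p /[!inE] /eqP -> //|y Ly yn].
  by exists (w, F); [rewrite inE|exact: wF_cover].
by exists [::]; split=> // y Ly /(wF_cover y Ly) /notL.
Qed.

End Compactness.

Section FinitelyDefined.
Variables (A : countType) (L : sq A -> Prop).
Hypothesis L_inSigma : forall x, L x -> inSigma x.

(* Both index families of [finitely_defined] range over all words over [A~],
   enumerated through [unpickle]. *)
Definition word_of j : seq (option A) := odflt [::] (unpickle j).

Definition forces (P : sq A -> Prop) (w : seq (option A)) :=
  0 < size w /\ (exists x, L x /\ prefix_is x (size w).-1 w) /\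
  forall y, L y -> prefix_is y (size w).-1 w -> P y.

Lemma forces_occurs P w : forces P w -> occurs (@inSigma A) w.
Proof.
move=> [sizew [[x [Lx [_ xw]]] _]]; exists x; split; first exact: L_inSigma.
by exists 0 => j ltjw; rewrite add0n xw // -ltnS prednK.
Qed.

Lemma forces_word_of (P : sq A -> Prop) x n :
  L x -> (forall y, L y -> (forall k, k <= n -> y k = x k) -> P y) ->
  exists j, forces P (word_of j) /\ prefix_is x (size (word_of j)).-1 (word_of j).
Proof.
move=> Lx xP; set w := map x (iota 0 n.+1).
have sizew : size w = n.+1 by rewrite size_map size_iota.
have nth_w k : k <= n -> nth None w k = x k.
  by move=> lekn; rewrite (nth_map 0) ?size_iota // nth_iota.
have xw : prefix_is x n w by split=> // k /nth_w ->.
exists (pickle w); rewrite /word_of pickleK [odflt _ _]/= sizew.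
split=> //; rewrite /forces sizew; split=> //; split; first by exists x.
by move=> y Ly [_ yw]; apply: xP => // k lekn; rewrite yw // nth_w.
Qed.

Lemma forces_cover (P : sq A -> Prop) :
  (forall x, L x -> P x -> exists n,
     forall y, L y -> (forall k, k <= n -> y k = x k) -> P y) ->
  forall x, L x /\ P x <->
    L x /\ exists i, forces P (word_of i) /\ prefix_is x (size (word_of i)).-1 (word_of i).
Proof.
move=> P_local x; split=> [[Lx Px]|[Lx [i [[_ [_ forcesP]] xi]]]].
  by have [n xn] := P_local x Lx Px; split=> //; apply: forces_word_of xn.
by split=> //; apply: forcesP.
Qed.

Lemma finitely_defined_of_local (C : sq A -> Prop) :
  (forall x, C x -> L x) ->
  (forall x, L x -> exists n,
     forall y, L y -> (forall k, k <= n -> y k = x k) -> (C y <-> C x)) ->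
  finitely_defined L C.
Proof.
move=> CL C_local; split=> //.
exists (fun i => forces C (word_of i)), (fun j => forces (fun y => ~ C y) (word_of j)).
exists (fun i => (size (word_of i)).-1), (fun j => (size (word_of j)).-1).
exists word_of, word_of.
split; first by move=> i /forces_occurs.
split; first by move=> j /forces_occurs.
have C_local' x : L x -> C x -> exists n,
    forall y, L y -> (forall k, k <= n -> y k = x k) -> C y.
  by move=> Lx Cx; have [n xn] := C_local x Lx; exists n => y Ly /(xn y Ly) [_]; apply.
have notC_local x : L x -> ~ C x -> exists n,
    forall y, L y -> (forall k, k <= n -> y k = x k) -> ~ C y.
  by move=> Lx nCx; have [n xn] := C_local x Lx; exists n => y Ly /(xn y Ly) [yx _] /yx.
split=> [x|]; last exact: forces_cover notC_local.
by rewrite -(forces_cover C_local'); split=> [Cx|[]//]; split=> //; apply: CL.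
Qed.

End FinitelyDefined.

Section LocallyConstant.
Variables (A : countType) (T : eqType) (L : sq A -> Prop) (f : sq A -> T).
Hypotheses (L_inSigma : forall x, L x -> inSigma x) (L_closed : is_closed L).
Hypothesis f_locally_constant : forall x, L x -> nbhd x (fun y => L y -> f y = f x).

Definition const_on (w F : seq A) (t : T) := forall y, L y -> cyl w F y -> f y = t.

Lemma locally_constant_cyl x : L x -> exists w F, cyl w F x /\ const_on w F (f x).
Proof.
by move=> /f_locally_constant /nbhdP [w [F [xwF wFf]]]; exists w, F; split=> // y Ly /wFf ->.
Qed.

Lemma locally_constant_finite_range : exists s : seq T, forall x, L x -> f x \in s.
Proof.
have [|l [const cov]] :=
  @cyl_cover_finite _ L (fun w F => exists t, const_on w F t) L_inSigma L_closed.
  by move=> x /locally_constant_cyl [w [F [xwF wFf]]]; exists w, F; split=> //; exists (f x).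
have [s ls] := finite_choice const; exists s => x Lx.
by have [p lp xp] := cov x Lx; have [t st pt] := ls p lp; rewrite (pt x Lx xp).
Qed.

Lemma locally_constant_fibre_cyl_union t :
  exists l : seq (seq A * seq A),
    forall x, L x /\ f x = t <-> L x /\ exists2 p, p \in l & cyl p.1 p.2 x.
Proof.
have [|l [decided cov]] := @cyl_cover_finite _ L
    (fun w F => const_on w F t \/ forall y, L y -> cyl w F y -> f y <> t) L_inSigma L_closed.
  move=> x /locally_constant_cyl [w [F [xwF wFf]]]; exists w, F; split=> //.
  by case: (eqVneq (f x) t) => [<-|fxt]; [left|right=> y Ly /(wFf y Ly) ->; apply/eqP].
have [l' l'P] := exists_filter l (fun p => const_on p.1 p.2 t).
exists l' => x; split=> [[Lx fx]|[Lx [p /l'P [_ pt] xp]]]; last by split=> //; apply: pt.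
have [p lp xp] := cov x Lx; split=> //; exists p => //; apply/l'P; split=> //.
by case: (decided p lp) => // avoid; case: (avoid x Lx xp).
Qed.

Lemma locally_constant_fibre_finitely_defined t :
  finitely_defined L (fun x => L x /\ f x = t).
Proof.
apply: finitely_defined_of_local => // [x [] //|x Lx].
have [w [F [xwF wFf]]] := locally_constant_cyl Lx; exists (size w) => y Ly yx.
by rewrite (wFf y Ly (cyl_agree xwF (L_inSigma Ly) yx)); split=> -[].
Qed.

End LocallyConstant.

Section ShiftSpaces.
Variables (A : countType) (L : sq A -> Prop).
Hypothesis L_shift : shift_space L.

Lemma shift_space_inSigma x : L x -> inSigma x.
Proof. by case: L_shift => + _; apply. Qed.

Lemma shift_space_closed : is_closed L.
Proof. by case: L_shift => _ []. Qed.

Lemma shift_space_iter_shift n x : L x -> L (iter n (@shift A) x).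
Proof. by case: L_shift => _ [_ [Lsh _]] Lx; elim: n => //= n IH; apply: Lsh. Qed.

Lemma shift_space_Oseq : L (Oseq A) <-> infinite_set (Lset L).
Proof. by case: L_shift => _ [_ [_ []]]. Qed.

Lemma Lset_head x a : L x -> x 0 = Some a -> Lset L a.
Proof. by move=> Lx xa; exists x; split=> //; exists 0 => -[]. Qed.

End ShiftSpaces.

Definition sliding_block_partition (A B : countType) (L : sq A -> Prop)
    (G : sq B -> Prop) (d : B) (Phi : sq A -> sq B) (C : option B -> sq A -> Prop) :=
  (forall a x, C a x -> L x) /\
  (forall x, L x -> exists a, C a x) /\
  (forall a a' x, C a x -> C a' x -> a = a') /\
  (forall b x, C (Some b) x -> Lset G b) /\
  (forall a, finitely_defined L (C a)) /\
  (forall x, C None x -> C None (shift x)) /\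
  (forall x, L x -> forall n, C (Phi x n) (iter n (@shift A) x)) /\
  (forall b, Lset G b -> exists l : seq (seq A * seq A),
      forall x, C (Some b) x <-> L x /\ exists2 p, p \in l & cyl p.1 p.2 x) /\
  (exists l : seq B, forall b, Lset G b -> (exists x, C (Some b) x) -> b \in l) /\
  (forall M, 1 <= M -> exists FM : seq A,
      (forall a, a \in FM -> Lset L a) /\
      forall n x, 1 <= n <= M -> cyl [::] FM x -> L x ->
        C (Some d) (iter n.-1 (@shift A) x)).

Section ContinuousShiftCommutingMaps.
Variables (A B : countType) (L : sq A -> Prop) (G : sq B -> Prop).
Variables (d : B) (Phi : sq A -> sq B).
Hypotheses (L_shift : shift_space L) (G_shift : shift_space G).
Hypothesis Phi_into : forall x, L x -> G (Phi x).
Hypothesis Phi_Oseq : L (Oseq A) -> forall i, Phi (Oseq A) i = Some d.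
Hypothesis Phi_None_finitely_defined :
  G (Oseq B) -> finitely_defined L (fun x => L x /\ forall i, Phi x i = None).
Hypothesis Phi_continuous : continuous_on L Phi.
Hypothesis Phi_shift : forall x, L x -> forall i, Phi (shift x) i = shift (Phi x) i.

Let L_inSigma := shift_space_inSigma L_shift.
Let Phi_inSigma x (Lx : L x) := shift_space_inSigma G_shift (Phi_into Lx).

Lemma Phi_iter_shift n x i : L x -> Phi (iter n (@shift A) x) i = Phi x (n + i).
Proof.
move=> Lx; elim: n i => [|n IH] i //=.
rewrite Phi_shift ?addSnnS; [exact: IH|exact: shift_space_iter_shift].
Qed.

Lemma Phi_None_idx x k : L x -> x k = None -> Phi x k = Some d.
Proof.
move=> Lx xk; have Ox := iter_shift_Oseq (L_inSigma Lx) xk.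
rewrite -[k]addn0 -Phi_iter_shift // Ox Phi_Oseq // -Ox.
exact: shift_space_iter_shift.
Qed.

Lemma Phi_None_defined x i k : L x -> Phi x i = None -> x k <> None.
Proof.
move=> Lx Phixi xk.
have := Phi_None_idx Lx (inSigma_None_tail (L_inSigma Lx) xk (leq_maxr i k)).
by rewrite (inSigma_None_tail (Phi_inSigma Lx) Phixi (leq_maxl i k)).
Qed.

Lemma Phi0_locally_constant_Some x b :
  L x -> Phi x 0 = Some b -> nbhd x (fun y => L y -> Phi y 0 = Some b).
Proof.
move=> Lx Phix0; have [U [U_open PhiU]] := Phi_continuous (@cyl_open B [:: b] [::]).
have Ux : U x.
  apply/PhiU => //; split; first exact: Phi_inSigma.
  by split=> [[]|] //; case: (Phi x 1).
apply: nbhd_sub (U_open x (L_inSigma Lx) Ux) => y Uy Ly.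
by have [_ [Phiyb _]] := proj2 (PhiU y Ly) Uy; rewrite (Phiyb 0).
Qed.

Lemma Phi0_locally_constant_None x :
  L x -> Phi x 0 = None -> nbhd x (fun y => L y -> Phi y 0 = None).
Proof.
move=> Lx Phix0.
have Phix_None i : Phi x i = None by apply: inSigma_None_tail (Phi_inSigma Lx) Phix0 _.
have GO : G (Oseq B).
  suff -> : Oseq B = Phi x by apply: Phi_into.
  by apply: functional_extensionality => i; rewrite Phix_None.
have [_ [I [J [ell [n [b [b' [_ [_ [C_None _]]]]]]]]]] := Phi_None_finitely_defined GO.
have [_ [i [Ii [sizeb xb]]]] := proj1 (C_None x) (conj Lx Phix_None).
have defx j : j < (ell i).+1 -> x j <> None by move=> _; apply: Phi_None_defined Phix0.
have xi : cyl (prefix_word x (ell i).+1) [::] x.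
  by apply: cyl_prefix_word => //; [exact: L_inSigma|case: (x _)].
apply: nbhd_sub (nbhd_cyl xi) => y yi Ly.
have [_ ->] // : L y /\ forall i, Phi y i = None.
apply/C_None; split=> //; exists i; split=> //; split=> // k lek.
by rewrite (cyl_prefix_word_agree defx yi) ?xb.
Qed.

Lemma Phi0_locally_constant x : L x -> nbhd x (fun y => L y -> Phi y 0 = Phi x 0).
Proof.
move=> Lx; case Phix0: (Phi x 0) => [b|].
  exact: Phi0_locally_constant_Some.
exact: Phi0_locally_constant_None.
Qed.

Lemma Phi_d_near_Oseq M : exists FM : seq A, (forall a, a \in FM -> Lset L a) /\
  forall n x, n < M -> cyl [::] FM x -> L x -> Phi x n = Some d.
Proof.
have [LO|notLO] := classic (L (Oseq A)); last first.
  have [s Ls] : exists s : seq A, forall a, Lset L a -> a \in s.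
    by apply: NNPP => Lset_inf; apply/notLO/shift_space_Oseq.
  have [FM FMP] := exists_filter s (Lset L).
  exists FM; split=> [a /FMP [] //|n x _ [Sx [_ xFM]] Lx].
  case x0: (x 0) xFM => [a|] /=; last by case: notLO; rewrite -(iter_shift_Oseq Sx x0).
  have La := Lset_head Lx x0.
  by rewrite (proj2 (FMP a)) ?Ls.
have [U [U_open PhiU]] := Phi_continuous (@cyl_open B (nseq M d) [::]).
have UO : U (Oseq A).
  apply/PhiU => //; split; first exact: Phi_inSigma.
  split=> [i|]; last by case: (Phi _ _).
  by rewrite size_nseq map_nseq => ltiM; rewrite nth_nseq ltiM Phi_Oseq.
have [F FU] := nbhd_Oseq (U_open _ (L_inSigma LO) UO).
have [FM FMP] := exists_filter F (Lset L).
exists FM; split=> [a /FMP [] //|n x ltnM [Sx [_ xFM]] Lx].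
have Ux : U x.
  apply: FU; split=> //; split=> //.
  case x0: (x 0) xFM => [a|] //=; apply: contra => aF.
  by apply/FMP; split; last exact: Lset_head x0.
have [_ [PhiM _]] := proj2 (PhiU x Lx) Ux.
by rewrite PhiM ?size_nseq // map_nseq nth_nseq ltnM.
Qed.

Lemma Phi_fibres_sliding_block_partition :
  sliding_block_partition L G d Phi (fun a x => L x /\ Phi x 0 = a).
Proof.
have L_closed := shift_space_closed L_shift.
pose Phi0 x := Phi x 0.
have loc : forall x, L x -> nbhd x (fun y => L y -> Phi0 y = Phi0 x).
  exact: Phi0_locally_constant.
split; first by move=> a x [].
split; first by move=> x Lx; exists (Phi x 0).
split; first by move=> a a' x [_ <-] [_ <-].
split; first by move=> b x [Lx Phix0]; apply: Lset_head (Phi_into Lx) Phix0.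
split; first by move=> a; apply: locally_constant_fibre_finitely_defined L_inSigma loc _.
split.
  move=> x [Lx Phix0]; split; first exact: (shift_space_iter_shift L_shift 1).
  by rewrite Phi_shift //; apply: inSigma_None_tail (Phi_inSigma Lx) Phix0 _.
split.
  by move=> x Lx n; split; [exact: shift_space_iter_shift|rewrite Phi_iter_shift ?addn0].
split; first by move=> b _; apply: locally_constant_fibre_cyl_union L_inSigma L_closed loc _.
split.
  have [s Phis] := locally_constant_finite_range L_inSigma L_closed loc.
  by exists (pmap id s) => b _ [x [Lx Phix0]]; rewrite mem_pmap map_id -Phix0 Phis.
move=> M _; have [FM [FML FMd]] := Phi_d_near_Oseq M.
exists FM; split=> // n x /andP [n_gt0 leM] xFM Lx.
split; first exact: shift_space_iter_shift.
by rewrite Phi_iter_shift // addn0 FMd // prednK.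
Qed.

End ContinuousShiftCommutingMaps.

Section SlidingBlockCodes.
Variables (A B : countType) (L : sq A -> Prop) (G : sq B -> Prop) (d : B).
Variables (Phi : sq A -> sq B) (C : option B -> sq A -> Prop).
Hypotheses (L_shift : shift_space L) (G_shift : shift_space G).
Hypothesis Phi_into : forall x, L x -> G (Phi x).
Hypothesis C_uniq : forall a a' x, C a x -> C a' x -> a = a'.
Hypothesis C_symbols : forall b x, C (Some b) x -> Lset G b.
Hypothesis Phi_code : forall x, L x -> forall n, C (Phi x n) (iter n (@shift A) x).
Hypothesis C_cyl_union : forall b, Lset G b -> exists l : seq (seq A * seq A),
  forall x, C (Some b) x <-> L x /\ exists2 p, p \in l & cyl p.1 p.2 x.
Hypothesis C_d_near_Oseq : forall M, 1 <= M -> exists FM : seq A,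
  (forall a, a \in FM -> Lset L a) /\
  forall n x, 1 <= n <= M -> cyl [::] FM x -> L x -> C (Some d) (iter n.-1 (@shift A) x).

Let L_inSigma := shift_space_inSigma L_shift.
Let Phi_inSigma x (Lx : L x) := shift_space_inSigma G_shift (Phi_into Lx).

Lemma Phi_codeE x n a : L x -> C a (iter n (@shift A) x) -> Phi x n = a.
Proof. by move=> Lx; apply: C_uniq (Phi_code Lx n). Qed.

Lemma Phi_shift_code x i : L x -> Phi (shift x) i = shift (Phi x) i.
Proof.
move=> Lx; apply: Phi_codeE; first exact: (shift_space_iter_shift L_shift 1).
by rewrite -iterSr; apply: Phi_code.
Qed.

Lemma C_Some_nbhd b z : C (Some b) z -> nbhd z (fun u => L u -> C (Some b) u).
Proof.
move=> Cz; have [l lC] := C_cyl_union (C_symbols Cz).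
have [Lz [p lp zp]] := proj1 (lC z) Cz.
by apply: nbhd_sub (nbhd_cyl zp) => u up Lu; apply/lC; split=> //; exists p.
Qed.

Lemma not_C_Some_nbhd b z : L z -> ~ C (Some b) z -> nbhd z (fun u => L u -> ~ C (Some b) u).
Proof.
move=> Lz nCz; have [Gb|nGb] := classic (Lset G b); last first.
  by apply: nbhd_sub (nbhdT (L_inSigma Lz)) => u _ _ /C_symbols.
have [l lC] := C_cyl_union Gb.
have not_zp p : p \in l -> nbhd z (fun u => ~ cyl p.1 p.2 u).
  by move=> lp; apply: nbhd_not_cyl (L_inSigma Lz) _ => zp; apply/nCz/lC; split=> //; exists p.
apply: nbhd_sub (nbhd_all (L_inSigma Lz) not_zp) => u not_up Lu /lC [_ [p lp up]].
exact: not_up p lp up.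
Qed.

(* Condition (2) at [M = i - k + 1], applied to the shift of [y] by [k]. *)
Lemma Phi_after_None_nbhd x k i :
  L x -> x k = None -> (forall j, j < k -> x j <> None) -> k <= i ->
  nbhd x (fun y => L y -> Phi y i = Some d).
Proof.
move=> Lx xk defx leki; have [FM [_ FMd]] := C_d_near_Oseq (ltn0Sn (i - k)).
have xFM : cyl (prefix_word x k) FM x.
  by apply: cyl_prefix_word => //; [exact: L_inSigma|rewrite xk].
apply: nbhd_sub (nbhd_cyl xFM) => y [Sy [_ yFM]] Ly; apply: Phi_codeE => //.
rewrite -(subnK leki) iterD; apply: (FMd (i - k).+1); last exact: shift_space_iter_shift.
  by rewrite ltn0Sn leqnn.
split; first exact: inSigma_iter_shift.
by split=> //; rewrite iter_shiftE addn0; move: yFM; rewrite size_prefix_word.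
Qed.

Lemma Phi_Some_nbhd x i b :
  L x -> Phi x i = Some b -> nbhd x (fun y => L y -> Phi y i = Some b).
Proof.
move=> Lx Phixi; have [defx|[k [ltki xk defx]]] := defined_or_first_None x i.
  have Cb := Phi_code Lx i; rewrite Phixi in Cb.
  apply: nbhd_sub (nbhd_iter_shift (L_inSigma Lx) defx (C_Some_nbhd Cb)) => y Cy Ly.
  by apply: Phi_codeE => //; apply: Cy; apply: shift_space_iter_shift.
have Phid := Phi_after_None_nbhd Lx xk defx (ltnW ltki).
by move: Phixi; rewrite (nbhd_self Phid Lx) => -[<-].
Qed.

Lemma Phi_None_nbhd x i (F : seq B) :
  L x -> Phi x i = None ->
  nbhd x (fun y => L y -> if Phi y i is Some a then is_true (a \notin F) else True).
Proof.
move=> Lx Phixi; have [defx|[k [ltki xk defx]]] := defined_or_first_None x i;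
  last by rewrite (nbhd_self (Phi_after_None_nbhd Lx xk defx (ltnW ltki)) Lx) in Phixi.
have Lz := shift_space_iter_shift L_shift i Lx.
have Cz := Phi_code Lx i; rewrite Phixi in Cz.
have not_Cf f : f \in F -> nbhd (iter i (@shift A) x) (fun u => L u -> ~ C (Some f) u).
  by move=> _; apply: not_C_Some_nbhd Lz _ => /(C_uniq Cz).
apply: nbhd_sub (nbhd_iter_shift (L_inSigma Lx) defx (nbhd_all (L_inSigma Lz) not_Cf)).
move=> y not_Cy Ly; case Phiyi: (Phi y i) => [a|] //; apply/negP => aF.
by apply: (not_Cy a aF (shift_space_iter_shift L_shift i Ly)); rewrite -Phiyi; apply: Phi_code.
Qed.

Lemma Phi_cyl_nbhd x w F :
  L x -> cyl w F (Phi x) -> nbhd x (fun y => L y -> cyl w F (Phi y)).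
Proof.
move=> Lx [_ [Phixw PhixF]].
have prefix_nbhd :
    nbhd x (fun y => forall i, i \in iota 0 (size w) -> L y -> Phi y i = Phi x i).
  apply: nbhd_all (L_inSigma Lx) _ => i; rewrite mem_iota => /andP [_ ltiw].
  have [b wb] := nth_map_Some ltiw; have Phixi : Phi x i = Some b by rewrite Phixw.
  by apply: nbhd_sub (Phi_Some_nbhd Lx Phixi) => y Phiy Ly; rewrite Phixi Phiy.
have next_nbhd : nbhd x (fun y => L y ->
    if Phi y (size w) is Some a then is_true (a \notin F) else True).
  case Phixw': (Phi x (size w)) PhixF => [e|] PhixF; last exact: Phi_None_nbhd.
  by apply: nbhd_sub (Phi_Some_nbhd Lx Phixw') => y Phiy Ly; rewrite Phiy.
apply: nbhd_sub (nbhd_and prefix_nbhd next_nbhd) => y [Phiy PhiyF] Ly.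
split; first exact: Phi_inSigma.
by split=> [i ltiw|]; [rewrite Phiy ?mem_iota ?Phixw|apply: PhiyF].
Qed.

Lemma sliding_block_code_continuous : continuous_on L Phi.
Proof.
move=> V V_open; exists (fun x => ~ L x \/ V (Phi x)); split; last first.
  by move=> x Lx; split=> [VPhix|[notLx|//]]; [right|case: notLx].
move=> x Sx Ux; have [Lx|notLx] := classic (L x); last first.
  by apply: nbhd_sub (shift_space_closed L_shift Sx notLx) => y; left.
have VPhix : V (Phi x) by case: Ux.
have [l [Phixl lV]] := V_open _ (Phi_inSigma Lx) VPhix.
have := nbhd_all (L_inSigma Lx) (fun p lp => Phi_cyl_nbhd Lx (proj2 Phixl p lp)).
apply: nbhd_sub => y Phiyl; have [Ly|] := classic (L y); last by left.
right; apply: lV; split; first exact: Phi_inSigma.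
by move=> p lp; apply: Phiyl.
Qed.

End SlidingBlockCodes.

Theorem mainTheorem2 (A B : countType) (L : sq A -> Prop) (G : sq B -> Prop)
  (d : B) (Phi : sq A -> sq B) :
  shift_space L -> shift_space G ->
  (forall x, L x -> G (Phi x)) ->
  (L (Oseq A) -> forall i, Phi (Oseq A) i = Some d) ->
  (G (Oseq B) -> finitely_defined L (fun x => L x /\ forall i, Phi x i = None)) ->
  ((continuous_on L Phi /\
    forall x, L x -> forall i, Phi (shift x) i = shift (Phi x) i)
   <->
   exists C : option B -> sq A -> Prop,
     (* {C_a} is a partition of Λ *)
     (forall a x, C a x -> L x) /\
     (forall x, L x -> exists a, C a x) /\
     (forall a a' x, C a x -> C a' x -> a = a') /\
     (* only symbols of L_Γ ∪ {ε} are used *)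
     (forall b x, C (Some b) x -> Lset G b) /\
     (* sliding block code *)
     (forall a, finitely_defined L (C a)) /\
     (forall x, C None x -> C None (shift x)) /\
     (forall x, L x -> forall n, C (Phi x n) (iter n (@shift A) x)) /\
     (* each C_a, a ∈ L_Γ, is a finite union of generalized cylinders of Λ *)
     (forall b, Lset G b -> exists l : seq (seq A * seq A),
         forall x, C (Some b) x <-> L x /\ exists2 p, p \in l & cyl p.1 p.2 x) /\
     (* (1) *)
     (exists l : seq B, forall b, Lset G b -> (exists x, C (Some b) x) -> b \in l) /\
     (* (2) *)
     (forall M, 1 <= M -> exists FM : seq A,
         (forall a, a \in FM -> Lset L a) /\
         forall n x, 1 <= n <= M -> cyl [::] FM x -> L x ->
           C (Some d) (iter n.-1 (@shift A) x))).
Proof.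
move=> L_shift G_shift Phi_into Phi_Oseq Phi_None_fd; split.
  move=> [Phi_cont Phi_shift]; exists (fun a x => L x /\ Phi x 0 = a).
  exact: Phi_fibres_sliding_block_partition L_shift G_shift Phi_into Phi_Oseq Phi_None_fd
    Phi_cont Phi_shift.
move=> [C [_ [_ [C_uniq [C_symbols [_ [_ [Phi_code [C_cyl [_ C_d]]]]]]]]]].
split; first exact: sliding_block_code_continuous L_shift G_shift Phi_into C_uniq C_symbols
  Phi_code C_cyl C_d.
by move=> x Lx i; apply: Phi_shift_code L_shift C_uniq Phi_code _ _ Lx.
Qed.
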